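(* Let $\theta_1,\ldots,\theta_N\in[0,1)$ be distinct, $z_q=e^{2\pi i\theta_q}$, let $\mathbf{V}$ be the $N\times N$ Vandermonde matrix with these phases, and let $\lambda_1(N)$ be the smallest eigenvalue of $\mathbf{V}^*\mathbf{V}$. For $p=1,\ldots,N$ let $$T_p(z)=\prod_{q\ne p}\frac{z-z_q}{|z_p-z_q|}.$$ Then $$\frac{1}{N^3\max_p\max_{|z|=1}|T_p(z)|^2}\le\lambda_1(N)\le\frac{1}{\max_p\max_{|z|=1}|T_p(z)|^2}.$$ Moreover, if $p_0$ is an index with $\prod_{q\ne p_0}|z_{p_0}-z_q|\le N$ (such an index always exists), then $$\lambda_1(N)\le\frac{N^2}{\max_{|z|=1}\prod_{q\ne p_0}|z-z_q|^2}\le\frac{4N^2}{\max_{|z|=1}\prod_{q=1}^N|z-z_q|^2}.$$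
   Context: The $N\times N$ Vandermonde matrix has entries $V(j,q)=\frac{1}{\sqrt N}e^{2\pi i (j-1)\theta_q}$, $j,q=1,\ldots,N$. *)

From Stdlib Require Import Reals Lra List.
Import ListNotations.
Open Scope R_scope.

Definition C := (R * R)%type.
Definition C0 : C := (0, 0).
Definition C1 : C := (1, 0).
Definition RtoC (r : R) : C := (r, 0).
Definition Cadd (a b : C) : C := (fst a + fst b, snd a + snd b).
Definition Copp (a : C) : C := (- fst a, - snd a).
Definition Csub (a b : C) : C := Cadd a (Copp b).
Definition Cmul (a b : C) : C :=
  (fst a * fst b - snd a * snd b, fst a * snd b + snd a * fst b).
Definition Cconj (a : C) : C := (fst a, - snd a).
Definition Cmod (a : C) : R := sqrt (fst a ^ 2 + snd a ^ 2).

Definition Cexpi (x : R) : C := (cos x, sin x).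

Definition Csum (N : nat) (f : nat -> C) : C :=
  fold_right Cadd C0 (map f (seq 0 N)).
Definition Cprod_filter (N : nat) (P : nat -> bool) (f : nat -> C) : C :=
  fold_right Cmul C1 (map f (filter P (seq 0 N))).
Definition Rmax_list (N : nat) (f : nat -> R) : R :=
  fold_right Rmax 0 (map f (seq 0 N)).

Definition zq (theta : nat -> R) (q : nat) : C := Cexpi (2 * PI * theta q).

(* Vandermonde matrix, 0-based: V(j,q) = 1/sqrt N * e^{2 pi i j theta_q},
   j,q = 0..N-1 (corresponding to the paper's (j-1), j = 1..N). *)
Definition Vdm (N : nat) (theta : nat -> R) (j q : nat) : C :=
  Cmul (RtoC (1 / sqrt (INR N))) (Cexpi (2 * PI * INR j * theta q)).

Definition Gram (N : nat) (theta : nat -> R) (j k : nat) : C :=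
  Csum N (fun l => Cmul (Cconj (Vdm N theta l j)) (Vdm N theta l k)).

Definition is_eigenvalue (N : nat) (A : nat -> nat -> C) (lam : C) : Prop :=
  exists x : nat -> C,
    (exists i, (i < N)%nat /\ x i <> C0) /\
    forall j, (j < N)%nat -> Csum N (fun k => Cmul (A j k) (x k)) = Cmul lam (x j).

Definition is_smallest_eigenvalue (N : nat) (A : nat -> nat -> C) (lam1 : R) : Prop :=
  is_eigenvalue N A (RtoC lam1) /\
  forall mu : C, is_eigenvalue N A mu -> snd mu = 0 /\ lam1 <= fst mu.

Definition is_max_circle (f : C -> R) (M : R) : Prop :=
  (exists z, Cmod z = 1 /\ f z = M) /\ (forall z, Cmod z = 1 -> f z <= M).

Definition Tp (N : nat) (theta : nat -> R) (p : nat) (z : C) : C :=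
  Cprod_filter N (fun q => negb (Nat.eqb q p))
    (fun q => Cmul (Csub z (zq theta q)) (RtoC (/ Cmod (Csub (zq theta p) (zq theta q))))).

Definition Pp (N : nat) (theta : nat -> R) (p : nat) (z : C) : C :=
  Cprod_filter N (fun q => negb (Nat.eqb q p)) (fun q => Csub z (zq theta q)).

Definition Pall (N : nat) (theta : nat -> R) (z : C) : C :=
  Cprod_filter N (fun _ => true) (fun q => Csub z (zq theta q)).

Definition gap_prod (N : nat) (theta : nat -> R) (p : nat) : R :=
  fold_right Rmult 1
    (map (fun q => Cmod (Csub (zq theta p) (zq theta q)))
       (filter (fun q => negb (Nat.eqb q p)) (seq 0 N))).

(* Let L_p = prod_(q<>p) (X - z_q) / (z_p - z_q) be the Lagrange basis, with
   coefficients c_(p,j); on the unit circle |T_p| = |L_p|, and the matrix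
   (c_(p,j)) is the inverse of (z_q^j).  The argument is first carried out over
   an arbitrary numClosedFieldType:
   - upper bound: Rayleigh's inequality (from the spectral theorem) applied to
     V^-1 conj(c_p) gives lambda N sum_j |c_(p,j)|^2 <= 1, while Cauchy-Schwarz
     gives |L_p|^2 <= N sum_j |c_(p,j)|^2 on the circle;
   - lower bound: discrete Fourier inversion at the N-th roots of unity bounds
     every |c_(p,j)|^2 by max |L_p|^2, and for an eigenvector X the identity
     N^(-1/2) X = C (V X) then gives |X|^2 <= N^3 max |L_p|^2 lambda |X|^2;
   - taking moduli in sum_p z_p^(N-1) / prod_(q<>p) (z_p - z_q) = 1 yields a
     node whose gap product is at most N; the products prod_(q<>p0) (z - z_q)
     and prod_q (z - z_q) are compared through L_p0 and the bound |z - z_p0| <= 2.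
   The complex numbers of the statement (pairs of reals) are then transported to
   R[i], the hypotheses on theta instantiate the abstract results, and the
   resulting real inequalities are combined into the theorem. *)

From Pilot Require Import Defs.
From Stdlib Require Import Reals Lra Lia List.
From mathcomp Require all_boot all_order all_algebra spectral ring zify Rstruct complex.
Open Scope R_scope.

Module VandermondeSpectrum.
Import all_boot all_order all_algebra spectral zify Rstruct complex.
Import Order.TTheory GRing.Theory Num.Theory.
Set Implicit Arguments. Unset Strict Implicit. Unset Printing Implicit Defensive.

Section CauchySchwarz.
Import ring.
Variable F : numDomainType.
Local Open Scope ring_scope.

(* Cauchy-Schwarz for nonnegative families, via Lagrange's identity
   0 <= sum_{i,j} (a_i b_j - a_j b_i)^2 = 2 (|a|^2 |b|^2 - <a,b>^2). *)
Lemma cauchy_schwarz_nonneg n (a b : 'I_n -> F) :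
  (forall i, 0 <= a i) -> (forall i, 0 <= b i) ->
  (\sum_i a i * b i) ^+ 2 <= (\sum_i a i ^+ 2) * (\sum_i b i ^+ 2).
Proof.
move=> a0 b0.
set SA := \sum_i a i ^+ 2; set SB := \sum_i b i ^+ 2; set S := \sum_i a i * b i.
have lagrange_ge0 : 0 <= \sum_i \sum_j (a i * b j - a j * b i) ^+ 2.
  apply: sumr_ge0 => i _; apply: sumr_ge0 => j _.
  by rewrite -realEsqr rpredB // ger0_real // mulr_ge0.
have sumAB : \sum_i \sum_j a i ^+ 2 * b j ^+ 2 = SA * SB.
  by rewrite mulr_suml; apply: eq_bigr => i _; rewrite mulr_sumr.
have sumBA : \sum_i \sum_j a j ^+ 2 * b i ^+ 2 = SA * SB.
  by rewrite exchange_big /= sumAB.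
have sumS : \sum_i \sum_j (a i * b i) * (a j * b j) = S ^+ 2.
  by rewrite expr2 mulr_suml; apply: eq_bigr => i _; rewrite mulr_sumr.
have lagrange_id : \sum_i \sum_j (a i * b j - a j * b i) ^+ 2 =
    \sum_i \sum_j a i ^+ 2 * b j ^+ 2 + \sum_i \sum_j a j ^+ 2 * b i ^+ 2
    - 2%:R * \sum_i \sum_j (a i * b i) * (a j * b j).
  rewrite mulr_sumr -big_split -sumrB; apply: eq_bigr => i _.
  rewrite mulr_sumr -big_split -sumrB; apply: eq_bigr => j _ /=; ring.
move: lagrange_ge0; rewrite lagrange_id sumAB sumBA sumS => h.
rewrite -subr_ge0 -(pmulr_rge0 _ (ltr0Sn F 1)).
by have -> : 2%:R * (SA * SB - S ^+ 2) = SA * SB + SA * SB - 2%:R * S ^+ 2 by ring.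
Qed.

Lemma norm_sqr_le_cauchy_schwarz n (x : F) (a b : 'I_n -> F) :
  (forall i, 0 <= a i) -> (forall i, 0 <= b i) -> `|x| <= \sum_i a i * b i ->
  `|x| ^+ 2 <= (\sum_i a i ^+ 2) * (\sum_i b i ^+ 2).
Proof.
move=> a0 b0 hx; apply: le_trans (cauchy_schwarz_nonneg a0 b0).
by rewrite ler_pXn2r // nnegrE ?normr_ge0 // (le_trans _ hx).
Qed.

End CauchySchwarz.

Section Rayleigh.
Variable F : numClosedFieldType.
Local Open Scope ring_scope.
Local Open Scope sesquilinear_scope.

Definition sqnorm n (X : 'cV[F]_n) : F := (X ^t* *m X) 0 0.

Lemma trmxC_mul m n p (A : 'M[F]_(m, n)) (B : 'M[F]_(n, p)) :
  (A *m B) ^t* = B ^t* *m A ^t*.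
Proof. by rewrite trmx_mul map_mxM. Qed.

Lemma sqnormE n (X : 'cV[F]_n) : sqnorm X = \sum_i `|X i 0| ^+ 2.
Proof. by rewrite /sqnorm mxE; apply: eq_bigr => i _; rewrite !mxE normCK mulrC. Qed.

Lemma sqnorm_ge0 n (X : 'cV[F]_n) : 0 <= sqnorm X.
Proof. by rewrite sqnormE; apply: sumr_ge0 => i _; exact: exprn_ge0. Qed.

Lemma sqnorm_gt0 n (X : 'cV[F]_n) : X != 0 -> 0 < sqnorm X.
Proof.
move=> X0; rewrite lt_def sqnorm_ge0 andbT; apply: contra X0 => /eqP.
rewrite sqnormE => /psumr_eq0P X2_0; apply/eqP/matrixP => i j; rewrite ord1 mxE.
have /eqP := X2_0 (fun k _ => exprn_ge0 2 (normr_ge0 (X k 0))) i isT.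
by rewrite expf_eq0 /= normr_eq0 => /eqP.
Qed.

Lemma rayleigh_lower n (G : 'M[F]_n) (l : F) :
  G ^t* = G ->
  (forall mu (X : 'cV[F]_n), X != 0 -> G *m X = mu *: X -> l <= mu) ->
  forall X : 'cV[F]_n, l * sqnorm X <= (X ^t* *m G *m X) 0 0.
Proof.
move=> GH Hall X.
have Gn : G \is normalmx by apply/normalmxP; rewrite GH.
have GE := orthomx_spectralP Gn.
set P := spectralmx G in GE; set d := spectral_diag G in GE.
have PU : P \is unitarymx by exact: spectral_unitarymx.
have PP : P *m P ^t* = 1%:M by apply/unitarymxP.
have PtP : P ^t* *m P = 1%:M by apply: mulmx1C.
rewrite invmx_unitary // in GE.
have d_ge : forall i, l <= d 0 i.
  move=> i; apply: (Hall _ (P ^t* *m delta_mx i 0)).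
    apply/eqP => /(congr1 (mulmx P)); rewrite mulmxA PP mul1mx mulmx0.
    by move/matrixP/(_ i 0); rewrite !mxE !eqxx /= => /eqP; rewrite oner_eq0.
  rewrite GE -!mulmxA (mulmxA P) PP mul1mx.
  have -> : diag_mx d *m delta_mx i 0 = d 0 i *: delta_mx i (0 : 'I_1).
    apply/matrixP => k j; rewrite mul_diag_mx !mxE.
    by case: (eqVneq k i) => [->|_]; rewrite ?mulr0 ?mulr1.
  by rewrite scalemxAr.
set Y := P *m X.
have XX : sqnorm X = sqnorm Y.
  by rewrite /sqnorm /Y trmxC_mul mulmxA -(mulmxA _ _ P) PtP mulmx1.
have XGX : X ^t* *m G *m X = Y ^t* *m diag_mx d *m Y.
  by rewrite GE /Y trmxC_mul !mulmxA.
rewrite XX XGX sqnormE mulr_sumr mxE; apply: ler_sum => k _.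
rewrite mul_mx_diag !mxE normCK mulrC; set y := (\sum_j _).
rewrite [y^* * _ * y]mulrAC [y * y^*]mulrC.
by apply: ler_wpM2l => //; rewrite mulrC -normCK exprn_ge0.
Qed.

End Rayleigh.

Section LagrangeBasis.
Variable F : fieldType.
Local Open Scope ring_scope.
Variable N : nat.
Variable Z : nat -> F.
Hypothesis Z_inj : forall p q, (p < N)%N -> (q < N)%N -> p != q -> Z p != Z q.

Definition others p := [seq q <- iota 0 N | q != p].

Definition lagrange_den p := \prod_(q <- others p) (Z p - Z q).
Definition lagrange p : {poly F} :=
  (lagrange_den p)^-1 *: \prod_(q <- others p) ('X - (Z q)%:P).
Definition lagrange_coef p j := (lagrange p)`_j.

Lemma mem_others p q : (q \in others p) = (q < N)%N && (q != p).
Proof. by rewrite mem_filter mem_iota add0n andbC. Qed.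

Lemma size_others p : (p < N)%N -> size (others p) = N.-1.
Proof.
move=> pN; rewrite size_filter.
have := count_predC (pred1 p) (iota 0 N).
rewrite size_iota (count_uniq_mem _ (iota_uniq 0 N)) mem_iota add0n pN /= => e.
by rewrite -[in RHS]e add1n.
Qed.

Lemma lagrange_den_neq0 p : (p < N)%N -> lagrange_den p != 0.
Proof.
move=> pN; rewrite prodf_seq_neq0; apply/allP => q.
by rewrite mem_others => /andP[qN qp] /=; rewrite subr_eq0 Z_inj // eq_sym.
Qed.

Lemma horner_lagrange p w :
  (lagrange p).[w] = (lagrange_den p)^-1 * \prod_(q <- others p) (w - Z q).
Proof.
rewrite hornerZ horner_prod; congr (_ * _).
by apply: eq_bigr => q _; rewrite hornerXsubC.
Qed.

Lemma lagrange_node p q : (p < N)%N -> (q < N)%N -> (lagrange p).[Z q] = (p == q)%:R.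
Proof.
move=> pN qN; rewrite horner_lagrange; case: (eqVneq p q) => [<-|pq].
  by rewrite mulVf // lagrange_den_neq0.
by rewrite (big_rem q) /= ?mem_others ?qN 1?eq_sym ?pq // subrr mul0r mulr0.
Qed.

Lemma size_lagrange p : (p < N)%N -> size (lagrange p) = N.
Proof.
move=> pN; rewrite size_scale ?invr_eq0 ?lagrange_den_neq0 //.
by rewrite size_prod_XsubC size_others // prednK // (leq_ltn_trans _ pN).
Qed.

Lemma lagrange_lead_coef p : (p < N)%N -> lagrange_coef p N.-1 = (lagrange_den p)^-1.
Proof.
move=> pN; rewrite /lagrange_coef coefZ.
have -> : N.-1 = (size (\prod_(q <- others p) ('X - (Z q)%:P))).-1.
  by rewrite size_prod_XsubC size_others.
by rewrite -lead_coefE (monicP (monic_prod_XsubC _ _ _)) mulr1.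
Qed.

Lemma horner_lagrange_coef p w : (p < N)%N ->
  (lagrange p).[w] = \sum_(j < N) lagrange_coef p j * w ^+ j.
Proof. by move=> pN; rewrite (horner_coef_wide _ (n := N)) ?size_lagrange. Qed.

Definition vandermonde : 'M[F]_N := \matrix_(j < N, q < N) Z q ^+ j.
Definition lagrange_mx : 'M[F]_N := \matrix_(p < N, j < N) lagrange_coef p j.

Lemma lagrange_mxK : lagrange_mx *m vandermonde = 1%:M.
Proof.
apply/matrixP => p q; rewrite !mxE.
under eq_bigr => j _ do rewrite !mxE.
by rewrite -horner_lagrange_coef // lagrange_node.
Qed.

(* Entry (N-1, N-1) of vandermonde * lagrange_mx = 1: the leading
   coefficients satisfy sum_p Z_p^(N-1) / prod_{q<>p} (Z_p - Z_q) = 1. *)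
Lemma sum_lagrange_lead (N_gt0 : (0 < N)%N) :
  \sum_(p < N) Z p ^+ N.-1 * (lagrange_den p)^-1 = 1.
Proof.
have iN : (N.-1 < N)%N by rewrite ltn_predL.
have /matrixP/(_ (Ordinal iN) (Ordinal iN)) := mulmx1C lagrange_mxK.
rewrite !mxE eqxx /= => h; rewrite -[RHS]h.
by apply: eq_bigr => p _; rewrite !mxE lagrange_lead_coef.
Qed.

End LagrangeBasis.

Section NodeProducts.
Variable F : numFieldType.
Local Open Scope ring_scope.
Variable N : nat.
Variable Z : nat -> F.
Hypothesis Z_inj : forall p q, (p < N)%N -> (q < N)%N -> p != q -> Z p != Z q.

Definition gap p := \prod_(q <- others N p) `|Z p - Z q|.

Lemma gap_den p : gap p = `|lagrange_den N Z p|.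
Proof. by rewrite /gap /lagrange_den normr_prod. Qed.

Lemma gap_gt0 p : (p < N)%N -> 0 < gap p.
Proof. by move=> pN; rewrite gap_den normr_gt0 lagrange_den_neq0. Qed.

Lemma norm_prod_others p w : (p < N)%N ->
  `|\prod_(q <- others N p) (w - Z q)| = gap p * `|(lagrange N Z p).[w]|.
Proof.
move=> pN; rewrite horner_lagrange normrM normfV -gap_den mulrA.
by rewrite mulfV ?mul1r // gt_eqF // gap_gt0.
Qed.

Lemma norm_normalized_prod p w : (p < N)%N ->
  `|\prod_(q <- others N p) ((w - Z q) * `|Z p - Z q|^-1)| = `|(lagrange N Z p).[w]|.
Proof.
move=> pN; rewrite big_split /= prodfV normrM normfV -/(gap p).
by rewrite (ger0_norm (ltW (gap_gt0 pN))) norm_prod_others // mulrC mulKf // gt_eqF // gap_gt0.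
Qed.

Lemma prod_nodes_split p w : (p < N)%N ->
  \prod_(q <- iota 0 N) (w - Z q) = (w - Z p) * \prod_(q <- others N p) (w - Z q).
Proof. by move=> pN; rewrite (big_rem p) ?mem_iota //= rem_filter ?iota_uniq. Qed.

(* Some node has gap product at most N: otherwise, taking moduli in
   sum_p Z_p^(N-1) / lagrange_den p = 1 would give 1 < N * (1/N). *)
Lemma gap_exists : (0 < N)%N -> (forall q, (q < N)%N -> `|Z q| = 1) ->
  exists2 p, (p < N)%N & gap p <= N%:R.
Proof.
move=> N_gt0 Z_norm.
case: (boolP [exists p : 'I_N, gap p <= N%:R]) => [/existsP [p hp]|].
  by exists p.
rewrite negb_exists => /forallP gap_big.
have : 1 <= \sum_(p < N) (gap p)^-1.
  rewrite -{1}(normr1 F) -(sum_lagrange_lead Z_inj N_gt0).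
  apply: le_trans (ler_norm_sum _ _ _) _; apply: ler_sum => p _.
  by rewrite normrM normrX Z_norm // expr1n mul1r normfV gap_den.
have : \sum_(p < N) (gap p)^-1 < \sum_(p < N) (N%:R)^-1 :> F.
  apply: ltr_sum; first by apply/hasP; exists (Ordinal N_gt0); rewrite ?mem_index_enum.
  move=> p _; have := gap_big p; rewrite -real_ltNge ?realn ?gtr0_real ?gap_gt0 // => hp.
  by rewrite ltf_pV2 ?posrE ?ltr0n ?gap_gt0.
rewrite sumr_const card_ord -[(N%:R)^-1 *+ N]mulr_natr mulVf ?pnatr_eq0 -?lt0n // => lt1 ge1.
by have := lt_le_trans lt1 ge1; rewrite ltxx.
Qed.

End NodeProducts.

Lemma dvdn_shift_eq N i j : (N %| i + (N - j))%N -> (i < N)%N -> (j < N)%N -> i = j.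
Proof. by move=> /dvdnP [k hk] iN jN; case: k hk => [|[|k]] hk; nia. Qed.

Section UnitRootCoefficients.
Variable F : numFieldType.
Local Open Scope ring_scope.
Variable N : nat.
Variable om : F.
Hypothesis om_prim : N.-primitive_root om.

Let N_gt0 : (0 < N)%N := prim_order_gt0 om_prim.

Lemma norm_prim_root : `|om| = 1.
Proof.
apply/eqP; rewrite -(pexpr_eq1 N_gt0) // -normrX.
by rewrite (prim_expr_order om_prim) normr1.
Qed.

Lemma sum_prim_root_pow m :
  \sum_(k < N) (om ^+ m) ^+ k = if (N %| m)%N then N%:R else 0.
Proof.
rewrite (prim_order_dvd om_prim); case: eqP => [->|om_m_ne1].
  by under eq_bigr do rewrite expr1n; rewrite sumr_const card_ord.
have : (om ^+ m - 1) * \sum_(k < N) (om ^+ m) ^+ k = 0.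
  by rewrite -subrX1 exprAC (prim_expr_order om_prim) expr1n subrr.
by move/eqP; rewrite mulf_eq0 subr_eq0 => /orP [/eqP //|/eqP].
Qed.

Lemma coef_prim_root_sum (P : {poly F}) j : (size P <= N)%N -> (j < N)%N ->
  N%:R * P`_j = \sum_(k < N) P.[om ^+ k] * (om ^+ (N - j)) ^+ k.
Proof.
move=> sP jN.
under eq_bigr => k _ do rewrite (horner_coef_wide _ sP) mulr_suml.
rewrite exchange_big /=.
have char_sum i : \sum_(k < N) P`_i * (om ^+ k) ^+ i * (om ^+ (N - j)) ^+ k
    = P`_i * (if (N %| i + (N - j))%N then N%:R else 0).
  rewrite -sum_prim_root_pow mulr_sumr; apply: eq_bigr => k _.
  by rewrite -mulrA -!exprM -exprD mulnDl [(k * i)%N]mulnC.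
under eq_bigr => i _ do rewrite char_sum.
rewrite (bigD1 (Ordinal jN)) //= (subnKC (ltnW jN)) dvdnn big1 ?addr0 1?mulrC //.
move=> i /eqP ij; case: ifP => [/dvdn_shift_eq|_]; last by rewrite mulr0.
by move=> /(_ (ltn_ord i) jN) eij; case: ij; apply: val_inj.
Qed.

(* Each coefficient of a polynomial of size <= N is bounded by its maximum
   modulus on the unit circle: N |P_j| <= sum_k |P(om^k)|, then Cauchy-Schwarz. *)
Lemma coef_sqr_le_circle_max (P : {poly F}) j m : (size P <= N)%N -> (j < N)%N ->
  (forall w, `|w| = 1 -> `|P.[w]| ^+ 2 <= m) -> `|P`_j| ^+ 2 <= m.
Proof.
move=> sP jN P_le.
pose a : 'I_N -> F := fun k => `|P.[om ^+ k]|.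
have one_ge0 : forall k : 'I_N, (0 : F) <= 1 by move=> _; exact: ler01.
have sum_a : `|N%:R * P`_j| <= \sum_(k < N) a k * 1.
  rewrite coef_prim_root_sum //; apply: le_trans (ler_norm_sum _ _ _) _.
  apply: ler_sum => k _.
  by rewrite normrM !normrX norm_prim_root !expr1n /a mulr1.
have := norm_sqr_le_cauchy_schwarz (fun k => normr_ge0 _) one_ge0 sum_a.
under [X in _ <= _ * X]eq_bigr do rewrite expr1n.
rewrite sumr_const card_ord normrM normr_nat exprMn => h.
have sum_a2 : \sum_(k < N) a k ^+ 2 <= N%:R * m.
  have -> : N%:R * m = \sum_(k < N) m by rewrite sumr_const card_ord mulr_natl.
  apply: ler_sum => k _.
  by apply: P_le; rewrite normrX norm_prim_root expr1n.
have N2_gt0 : (0 : F) < N%:R ^+ 2 by rewrite exprn_gt0 // ltr0n.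
rewrite -(ler_pM2l N2_gt0); apply: le_trans h _.
by apply: le_trans (ler_wpM2r (ler0n _ N) sum_a2) _; rewrite mulrAC -expr2.
Qed.

End UnitRootCoefficients.

Section VandermondeGram.
Variable F : numClosedFieldType.
Local Open Scope ring_scope.
Local Open Scope sesquilinear_scope.
Variable N : nat.
Variable Z : nat -> F.
Hypothesis Z_inj : forall p q, (p < N)%N -> (q < N)%N -> p != q -> Z p != Z q.
Variable s : F.
Hypothesis s_gt0 : 0 < s.
Hypothesis s2N : s ^+ 2 * N%:R = 1.

Local Notation c := (lagrange_coef N Z).

Definition vdm_mx : 'M[F]_N := s *: vandermonde N Z.
Definition gram_mx : 'M[F]_N := vdm_mx ^t* *m vdm_mx.

Lemma gram_hermitian : gram_mx ^t* = gram_mx.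
Proof. by rewrite /gram_mx trmxC_mul trmxCK. Qed.

Lemma gram_quad (X : 'cV[F]_N) : (X ^t* *m gram_mx *m X) 0 0 = sqnorm (vdm_mx *m X).
Proof. by rewrite /sqnorm /gram_mx trmxC_mul !mulmxA. Qed.

Lemma gram_eigen_sqnorm (X : 'cV[F]_N) mu :
  gram_mx *m X = mu *: X -> mu * sqnorm X = sqnorm (vdm_mx *m X).
Proof. by move=> GX; rewrite -gram_quad -mulmxA GX -scalemxAr mxE. Qed.

Lemma lagrange_coef_vdm (p : 'I_N) (X : 'cV[F]_N) :
  s * X p 0 = \sum_(j < N) c p j * (vdm_mx *m X) j 0.
Proof.
have : lagrange_mx N Z *m (vdm_mx *m X) = s *: X.
  by rewrite /vdm_mx -scalemxAl -scalemxAr mulmxA lagrange_mxK // mul1mx.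
move/matrixP/(_ p 0); rewrite !mxE => <-.
by apply: eq_bigr => j _; rewrite mxE.
Qed.

Lemma lagrange_sqr_le_coef_mass p w : (p < N)%N -> `|w| = 1 ->
  `|(lagrange N Z p).[w]| ^+ 2 <= N%:R * \sum_(j < N) `|c p j| ^+ 2.
Proof.
move=> pN w1; rewrite horner_lagrange_coef //.
have sum_le : `|\sum_(j < N) c p j * w ^+ j| <= \sum_(j < N) `|c p j| * 1.
  apply: le_trans (ler_norm_sum _ _ _) _; apply: ler_sum => j _.
  by rewrite normrM normrX w1 expr1n.
have := norm_sqr_le_cauchy_schwarz (fun j => normr_ge0 _) (fun _ => ler01) sum_le.
by under [X in _ <= _ * X]eq_bigr do rewrite expr1n; rewrite sumr_const card_ord mulrC -mulr_natl.
Qed.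

Variable lam : F.
Hypothesis lam_eigen : exists2 X : 'cV[F]_N, X != 0 & gram_mx *m X = lam *: X.
Hypothesis lam_min :
  forall mu (X : 'cV[F]_N), X != 0 -> gram_mx *m X = mu *: X -> lam <= mu.

(* The smallest eigenvalue of the positive semidefinite V^* V is nonnegative. *)
Lemma lam_ge0 : 0 <= lam.
Proof.
case: lam_eigen => X X0 GX.
have := sqnorm_ge0 (vdm_mx *m X); rewrite -(gram_eigen_sqnorm GX) pmulr_lge0 //.
exact: sqnorm_gt0.
Qed.

(* Lower bound: if all Lagrange coefficients satisfy |c_{p,j}|^2 <= m, then for
   an eigenvector X, each |X_p|^2 <= N^2 m |V X|^2 (Cauchy-Schwarz), hence
   |X|^2 <= N^3 m |V X|^2 = N^3 m lam |X|^2. *)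
Lemma lam_lower_coef m : (forall p j : 'I_N, `|c p j| ^+ 2 <= m) ->
  1 <= N%:R ^+ 3 * m * lam.
Proof.
move=> c_le; case: lam_eigen => X X0 GX.
set W := vdm_mx *m X.
have entry_le (p : 'I_N) : `|X p 0| ^+ 2 <= N%:R ^+ 2 * m * sqnorm W.
  have sum_le : `|s * X p 0| <= \sum_(j < N) `|c p j| * `|W j 0|.
    rewrite lagrange_coef_vdm; apply: le_trans (ler_norm_sum _ _ _) _.
    by apply: ler_sum => j _; rewrite normrM.
  have cs := norm_sqr_le_cauchy_schwarz (fun j => normr_ge0 _) (fun j => normr_ge0 _) sum_le.
  have sum_c : \sum_(j < N) `|c p j| ^+ 2 <= N%:R * m.
    have -> : N%:R * m = \sum_(j < N) m by rewrite sumr_const card_ord mulr_natl.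
    by apply: ler_sum => j _; exact: c_le.
  have : `|s * X p 0| ^+ 2 <= N%:R * m * sqnorm W.
    apply: le_trans cs _; rewrite sqnormE; apply: ler_wpM2r sum_c.
    by apply: sumr_ge0 => j _; exact: exprn_ge0.
  move/(ler_wpM2l (ler0n F N)).
  rewrite normrM exprMn (ger0_norm (ltW s_gt0)) mulrA [N%:R * _]mulrC s2N mul1r.
  by rewrite expr2 !mulrA.
have : sqnorm X <= N%:R ^+ 3 * m * sqnorm W.
  rewrite {1}sqnormE; apply: le_trans (ler_sum _ (fun p _ => entry_le p)) _.
  by rewrite sumr_const card_ord -[_ * _ * sqnorm W *+ N]mulr_natl 2!mulrA -exprS.
rewrite /W -(gram_eigen_sqnorm GX) mulrA -{1}[sqnorm X]mul1r ler_pM2r //.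
exact: sqnorm_gt0.
Qed.

(* Upper bound on the coefficient mass: Rayleigh's inequality for the vector
   X = V^-1 conj(c_p), for which |V X|^2 = S := sum_j |c_{p,j}|^2 and s X_p = S,
   gives lam N S^2 = lam |X_p|^2 <= lam |X|^2 <= S. *)
Lemma lam_coef_mass (p : 'I_N) : lam * N%:R * \sum_(j < N) `|c p j| ^+ 2 <= 1.
Proof.
set S := \sum_(j < N) `|c p j| ^+ 2.
have S_ge0 : 0 <= S by apply: sumr_ge0 => j _; exact: exprn_ge0.
pose Y : 'cV[F]_N := \col_j (c p j)^*.
have V_unit : vdm_mx \in unitmx.
  suff /mulmx1_unit [] : (s^-1 *: lagrange_mx N Z) *m vdm_mx = 1%:M by [].
  rewrite /vdm_mx -scalemxAl -scalemxAr lagrange_mxK // scalerA mulVf ?scale1r //.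
  by rewrite gt_eqF.
pose X := invmx vdm_mx *m Y.
have VX : vdm_mx *m X = Y by rewrite /X mulKVmx.
have sqnormY : sqnorm Y = S.
  by rewrite sqnormE; apply: eq_bigr => j _; rewrite mxE norm_conjC.
have sXp : s * X p 0 = S.
  by rewrite lagrange_coef_vdm VX; apply: eq_bigr => j _; rewrite mxE normCK.
have Xp_le : `|X p 0| ^+ 2 <= sqnorm X.
  by rewrite sqnormE (bigD1 p) //= lerDl; apply: sumr_ge0 => i _; exact: exprn_ge0.
have Xp2 : `|X p 0| ^+ 2 = N%:R * S ^+ 2.
  have sXp2 : s ^+ 2 * `|X p 0| ^+ 2 = S ^+ 2.
    by rewrite -(ger0_norm (ltW s_gt0)) -exprMn -normrM sXp ger0_norm.
  by rewrite -[LHS]mul1r -[in LHS]s2N mulrAC sXp2 mulrC.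
have ray := rayleigh_lower gram_hermitian lam_min X.
rewrite gram_quad VX sqnormY in ray.
have key : lam * N%:R * S * S <= 1 * S.
  rewrite mul1r; apply: le_trans ray.
  have -> : lam * N%:R * S * S = lam * (N%:R * S ^+ 2) by rewrite expr2 !mulrA.
  by rewrite -Xp2; apply: ler_wpM2l; [exact: lam_ge0 | exact: Xp_le].
move: S_ge0; rewrite le0r => /orP [/eqP -> | S_gt0]; first by rewrite mulr0 ler01.
by move: key; rewrite ler_pM2r.
Qed.

Lemma lam_upper p w : (p < N)%N -> `|w| = 1 -> lam * `|(lagrange N Z p).[w]| ^+ 2 <= 1.
Proof.
move=> pN w1; apply: le_trans (lam_coef_mass (Ordinal pN)).
by rewrite -mulrA; apply: (ler_wpM2l lam_ge0); exact: lagrange_sqr_le_coef_mass.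
Qed.

(* Lower bound in terms of a bound m for |L_p|^2 on the unit circle, the
   coefficients being controlled through the N-th roots of unity. *)
Lemma lam_lower (om : F) m : N.-primitive_root om ->
  (forall p w, (p < N)%N -> `|w| = 1 -> `|(lagrange N Z p).[w]| ^+ 2 <= m) ->
  1 <= N%:R ^+ 3 * m * lam.
Proof.
move=> om_prim L_le; apply: lam_lower_coef => p j.
apply: (coef_sqr_le_circle_max om_prim) => // [|w]; first by rewrite size_lagrange.
exact: L_le.
Qed.

End VandermondeGram.

Section Phases.
Local Open Scope R_scope.

Lemma cos_sqr_add_sin_sqr x : cos x ^ 2 + sin x ^ 2 = 1.
Proof. by have := sin2_cos2 x; rewrite /Rsqr; lra. Qed.

Lemma Cmod_Cexpi x : Cmod (Cexpi x) = 1.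
Proof. by rewrite /Cmod /Cexpi /= cos_sqr_add_sin_sqr sqrt_1. Qed.

Lemma Cexpi_add x y : Cexpi (x + y) = Cmul (Cexpi x) (Cexpi y).
Proof. by rewrite /Cexpi /Cmul /= cos_plus sin_plus; f_equal; ring. Qed.

Lemma Cexpi_natS n x : Cexpi (INR n.+1 * x) = Cmul (Cexpi x) (Cexpi (INR n * x)).
Proof. by rewrite S_INR Rmult_plus_distr_r Rmult_1_l Rplus_comm Cexpi_add. Qed.

(* cos t < 1 on (0, 2 pi), as cos t = 1 - 2 sin(t/2)^2. *)
Lemma cos_lt_1 t : 0 < t -> t < 2 * PI -> cos t < 1.
Proof.
move=> t_gt0 t_lt.
have -> : cos t = 1 - 2 * sin (t / 2) * sin (t / 2).
  by rewrite -cos_2a_sin; f_equal; field.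
have : 0 < sin (t / 2) by apply: sin_gt_0; lra.
by move=> hs; nra.
Qed.

Lemma Cexpi_phase_inj t u : 0 <= t < 1 -> 0 <= u < 1 ->
  Cexpi (2 * PI * t) = Cexpi (2 * PI * u) -> t = u.
Proof.
move=> ht hu [hc hs]; have pi_gt0 := PI_RGT_0.
have cos_diff : cos (2 * PI * t - 2 * PI * u) = 1.
  by rewrite cos_minus hc hs; have := cos_sqr_add_sin_sqr (2 * PI * u); lra.
case: (Rtotal_order t u) => [tu|[//|ut]].
  have : cos (2 * PI * u - 2 * PI * t) < 1 by apply: cos_lt_1; nra.
  by rewrite -cos_neg Ropp_minus_distr cos_diff; lra.
have : cos (2 * PI * t - 2 * PI * u) < 1 by apply: cos_lt_1; nra.
lra.
Qed.

Definition unit_root_angle (n : nat) : R := 2 * PI / INR n.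

Lemma Cexpi_unit_root_order n : (0 < n)%N -> Cexpi (INR n * unit_root_angle n) = Defs.C1.
Proof.
move=> /ssrnat.ltP /lt_0_INR n_gt0; rewrite /unit_root_angle.
have -> : INR n * (2 * PI / INR n) = 2 * PI by field; lra.
by rewrite /Cexpi cos_2PI sin_2PI.
Qed.

Lemma Cexpi_unit_root_ne1 n m : (0 < m)%N -> (m < n)%N ->
  Cexpi (INR m * unit_root_angle n) <> Defs.C1.
Proof.
move=> /ssrnat.ltP /lt_0_INR m_gt0 /ssrnat.ltP /lt_INR mn [hc _].
have pi_gt0 := PI_RGT_0; set t := INR m * unit_root_angle n.
have t_scaled : t * INR n = 2 * PI * INR m by rewrite /t /unit_root_angle; field; lra.
have : cos t < 1.
  apply: cos_lt_1; apply: (Rmult_lt_reg_r (INR n)); rewrite ?t_scaled; nra.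
by rewrite hc; lra.
Qed.

Definition vdm_scale (N : nat) : R := 1 / sqrt (INR N).

Lemma Vdm_Cexpi N theta l q :
  Vdm N theta l q = Cmul (RtoC (vdm_scale N)) (Cexpi (INR l * (2 * PI * theta q))).
Proof. by rewrite /Vdm; do 2 f_equal; ring. Qed.

Lemma vdm_scale_gt0 N : (0 < N)%N -> 0 < vdm_scale N.
Proof.
move=> /ssrnat.ltP /lt_0_INR N_gt0.
by apply: Rdiv_lt_0_compat; [lra | exact: sqrt_lt_R0].
Qed.

Lemma vdm_scale_sqr N : (0 < N)%N -> vdm_scale N * vdm_scale N * INR N = 1.
Proof.
move=> /ssrnat.ltP /lt_0_INR N_gt0; rewrite /vdm_scale; have := sqrt_sqrt _ (Rlt_le _ _ N_gt0).
have : sqrt (INR N) <> 0 by apply: Rgt_not_eq; apply: sqrt_lt_R0.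
by move=> s_ne0 s_sqr; rewrite -{3}s_sqr; field.
Qed.

End Phases.

Section PairComplex.
Local Open Scope ring_scope.

Definition phi (a : Defs.C) : R[i] := Complex a.1 a.2.
Definition psi (z : R[i]) : Defs.C := let: Complex a b := z in (a, b).

Lemma phi_psi z : phi (psi z) = z. Proof. by case: z. Qed.
Lemma psi_phi a : psi (phi a) = a. Proof. by case: a. Qed.
Lemma phi_inj : injective phi. Proof. exact: can_inj psi_phi. Qed.

Lemma phi_add a b : phi (Cadd a b) = phi a + phi b.
Proof. by case: a => a1 a2; case: b. Qed.
Lemma phi_sub a b : phi (Csub a b) = phi a - phi b.
Proof. by rewrite /Csub phi_add; case: b. Qed.
Lemma phi_mul a b : phi (Cmul a b) = phi a * phi b.
Proof. by case: a => a1 a2; case: b. Qed.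
Lemma phi_RtoC r : phi (RtoC r) = r%:C%C. Proof. by []. Qed.

Lemma phi_conj a : phi (Cconj a) = (phi a)^*.
Proof.
have conjC_conjc (x : R[i]) : x^* = conjc x.
  have [->|x0] := eqVneq x 0; first by rewrite conjC0 conjc0.
  by apply: (mulfI x0); rewrite -normCK sqr_normc.
by rewrite conjC_conjc; case: a.
Qed.

Lemma Cmod_phi a : (Cmod a)%:C%C = `|phi a|.
Proof. by case: a => a1 a2; rewrite normc_def /Cmod RsqrtE !RpowE. Qed.

Lemma norm_phi_Cexpi x : `|phi (Cexpi x)| = 1.
Proof. by rewrite -Cmod_phi Cmod_Cexpi. Qed.

Lemma phi_Cexpi_nat n x : phi (Cexpi (INR n * x)) = phi (Cexpi x) ^+ n.
Proof.
elim: n => [|n IH]; first by rewrite Rmult_0_l /Cexpi cos_0 sin_0 expr0.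
by rewrite Cexpi_natS phi_mul IH exprS.
Qed.

Lemma seq_iota a n : List.seq a n = iota a n.
Proof. by elim: n a => //= n IH a; rewrite IH. Qed.

Lemma filter_iota P n : List.filter P (List.seq 0 n) = filter P (iota 0 n).
Proof. by rewrite seq_iota; elim: (iota 0 n) => //= x l ->. Qed.

Lemma eqbE q p : Nat.eqb q p = (q == p).
Proof. by case: (Nat.eqb_spec q p) => [->|h]; [rewrite eqxx | apply/esym/eqP]. Qed.

Lemma phi_Csum N f : phi (Csum N f) = \sum_(i < N) phi (f i).
Proof.
have fold_sum l : phi (fold_right Cadd Defs.C0 (List.map f l)) = \sum_(i <- l) phi (f i).
  by elim: l => [|x l IH] /=; rewrite ?big_nil // big_cons phi_add IH.
by rewrite /Csum fold_sum seq_iota -(big_mkord xpredT (fun i => phi (f i))) /index_iota subn0.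
Qed.

Lemma phi_Cprod N P f :
  phi (Cprod_filter N P f) = \prod_(i <- iota 0 N | P i) phi (f i).
Proof.
have fold_prod l : phi (fold_right Cmul Defs.C1 (List.map f l)) = \prod_(i <- l) phi (f i).
  by elim: l => [|x l IH] /=; rewrite ?big_nil // big_cons phi_mul IH.
by rewrite /Cprod_filter fold_prod filter_iota big_filter.
Qed.

Lemma phi_Cprod_others N p f :
  phi (Cprod_filter N (fun q => negb (Nat.eqb q p)) f) = \prod_(q <- others N p) phi (f q).
Proof.
rewrite phi_Cprod big_filter_cond; apply: eq_bigl => q.
by rewrite eqbE andbT.
Qed.

Lemma gap_prodE N theta p :
  gap_prod N theta p = \prod_(q <- others N p) Cmod (Csub (zq theta p) (zq theta q)).
Proof.
rewrite /gap_prod filter_iota (@eq_filter _ _ (fun q => q != p)) => [|q]; last first.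
  by rewrite eqbE.
rewrite -/(others N p).
by elim: (others N p) => [|x l IH] /=; rewrite ?big_nil // big_cons IH.
Qed.

End PairComplex.

Section GramInstance.
Local Open Scope ring_scope.
Local Open Scope sesquilinear_scope.
Variable N : nat.
Hypothesis N_gt0 : (0 < N)%N.
Variable theta : nat -> R.

Definition node q : R[i] := phi (zq theta q).
Definition unit_root (n : nat) : R[i] := phi (Cexpi (unit_root_angle n)).
Definition scale : R[i] := (vdm_scale N)%:C%C.

Lemma node_norm q : `|node q| = 1.
Proof. exact: norm_phi_Cexpi. Qed.

Lemma node_inj :
  (forall q, (q < N)%N -> Rle 0 (theta q) /\ Rlt (theta q) 1) ->
  (forall p q, (p < N)%N -> (q < N)%N -> p <> q -> theta p <> theta q) ->
  forall p q, (p < N)%N -> (q < N)%N -> p != q -> node p != node q.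
Proof.
move=> hrange hdist p q pN qN /eqP pq; apply/eqP => /phi_inj.
by move/(Cexpi_phase_inj (hrange p pN) (hrange q qN)); exact: hdist.
Qed.

Lemma unit_root_prim n : (0 < n)%N -> n.-primitive_root (unit_root n).
Proof.
move=> n_gt0.
have pow_m m : unit_root n ^+ m = phi (Cexpi (INR m * unit_root_angle n)).
  by rewrite phi_Cexpi_nat.
have root_n : unit_root n ^+ n = 1.
  by rewrite pow_m Cexpi_unit_root_order.
have [m m_prim m_dvd] := prim_order_exists n_gt0 root_n.
suff eq_mn : m = n by move: m_prim; rewrite eq_mn.
apply/eqP; rewrite eqn_leq dvdn_leq //= leqNgt; apply/negP => m_lt.
have := prim_expr_order m_prim; rewrite pow_m -[1]/(phi Defs.C1) => /phi_inj.
exact: Cexpi_unit_root_ne1 (prim_order_gt0 m_prim) m_lt.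
Qed.

Lemma scale_gt0 : 0 < scale.
Proof. by rewrite ltcR; apply/RltP; exact: vdm_scale_gt0. Qed.

Lemma scale_sqr : scale ^+ 2 * N%:R = 1.
Proof.
rewrite /scale -(rmorph_nat (real_complex R)) -rmorphXn -rmorphM.
by have := vdm_scale_sqr N_gt0; rewrite !RmultE INRE expr2 => ->.
Qed.

Definition ord_of j : 'I_N := insubd (Ordinal N_gt0) j.

Lemma ord_ofK (k : 'I_N) : ord_of k = k.
Proof. by rewrite /ord_of valKd. Qed.

Lemma val_ord_of j : (j < N)%N -> ord_of j = j :> nat.
Proof. by move=> jN; rewrite /ord_of val_insubd jN. Qed.

Lemma phi_Vdm l q : phi (Vdm N theta l q) = scale * node q ^+ l.
Proof. by rewrite Vdm_Cexpi phi_mul phi_RtoC phi_Cexpi_nat. Qed.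

Lemma phi_Gram j k : (j < N)%N -> (k < N)%N ->
  phi (Gram N theta j k) = gram_mx N node scale (ord_of j) (ord_of k).
Proof.
move=> jN kN; rewrite /Gram phi_Csum /gram_mx mxE; apply: eq_bigr => l _.
by rewrite phi_mul phi_conj !phi_Vdm !mxE !val_ord_of.
Qed.

Lemma eigen_gram_mx lam1 : is_eigenvalue N (Gram N theta) (RtoC lam1) ->
  exists2 X : 'cV[R[i]]_N, X != 0 & gram_mx N node scale *m X = lam1%:C%C *: X.
Proof.
case=> x [[i [iN xi0]] hx]; exists (\col_(k < N) phi (x k)).
  apply/eqP => /matrixP /(_ (Ordinal (introT ssrnat.ltP iN)) 0); rewrite !mxE => h.
  by apply: xi0; apply: phi_inj; rewrite h.
apply/matrixP => j z; rewrite ord1 !mxE.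
have := hx j (elimT ssrnat.ltP (ltn_ord j)); move/(congr1 phi).
rewrite phi_Csum phi_mul phi_RtoC => <-.
apply: eq_bigr => k _; rewrite phi_mul phi_Gram // !ord_ofK; congr (_ * _).
by rewrite mxE.
Qed.

Lemma eigen_min_gram_mx (lam1 : R) :
  (forall mu : Defs.C, is_eigenvalue N (Gram N theta) mu -> snd mu = 0 /\ Rle lam1 (fst mu)) ->
  forall mu (X : 'cV[R[i]]_N), X != 0 -> gram_mx N node scale *m X = mu *: X ->
  lam1%:C%C <= mu.
Proof.
move=> lam1_min mu X X0 GX.
have [i Xi] : exists i, X i 0 != 0.
  case: (pickP (fun i => X i 0 != 0)) => [i hi|h]; first by exists i.
  case/eqP: X0; apply/matrixP => i j; rewrite ord1 mxE.
  by have /negbFE /eqP := h i.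
have : is_eigenvalue N (Gram N theta) (psi mu).
  exists (fun k => psi (X (ord_of k) 0)); split.
    exists i; split; first exact: (elimT ssrnat.ltP (ltn_ord i)).
    by rewrite ord_ofK => h; case/eqP: Xi; rewrite -(phi_psi (X i 0)) h.
  move=> j /(introT ssrnat.ltP) jN; apply: phi_inj.
  rewrite phi_Csum phi_mul !phi_psi.
  have /matrixP/(_ (ord_of j) 0) := GX; rewrite !mxE => <-.
  by apply: eq_bigr => k _; rewrite phi_mul phi_psi phi_Gram // ord_ofK.
case: mu GX => a b GX /lam1_min /= [-> lam1_a].
by rewrite lecE /= eqxx /=; apply/RleP.
Qed.

End GramInstance.

Section NodePolynomials.
Local Open Scope ring_scope.
Variable N : nat.
Variable theta : nat -> R.
Hypothesis hrange : forall q, (q < N)%N -> Rle 0 (theta q) /\ Rlt (theta q) 1.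
Hypothesis hdist : forall p q, (p < N)%N -> (q < N)%N -> p <> q -> theta p <> theta q.

Local Notation Z := (node theta).
Local Notation L := (lagrange N Z).
Let Z_inj := node_inj hrange hdist.

Lemma Cmod_sqr_phi x : (pow (Cmod x) 2)%:C%C = `|phi x| ^+ 2.
Proof. by rewrite -Cmod_phi RpowE rmorphXn. Qed.

(* |T_p(z)| = |L_p(z)|: T_p is L_p normalised by the moduli of its denominators. *)
Lemma norm_phi_Tp p z : (p < N)%N -> `|phi (Tp N theta p z)| = `|(L p).[phi z]|.
Proof.
move=> pN; rewrite /Tp phi_Cprod_others -(norm_normalized_prod Z_inj _ pN).
congr `|_|; apply: eq_bigr => q _.
by rewrite phi_mul phi_sub phi_RtoC RinvE fmorphV -[Z p - _]phi_sub -Cmod_phi.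
Qed.

Lemma phi_Pp p z : phi (Pp N theta p z) = \prod_(q <- others N p) (phi z - Z q).
Proof.
by rewrite /Pp phi_Cprod_others; apply: eq_bigr => q _; rewrite phi_sub.
Qed.

Lemma phi_Pall z : phi (Pall N theta z) = \prod_(q <- iota 0 N) (phi z - Z q).
Proof. by rewrite /Pall phi_Cprod; apply: eq_bigr => q _; rewrite phi_sub. Qed.

Lemma gap_prod_phi p : (gap_prod N theta p)%:C%C = gap N Z p.
Proof.
rewrite gap_prodE rmorph_prod; apply: eq_bigr => q _.
by rewrite -[Z p - _]phi_sub -Cmod_phi.
Qed.

Lemma lagrange_circle_max p m : (p < N)%N ->
  is_max_circle (fun z => pow (Cmod (Tp N theta p z)) 2) m ->
  (forall w, `|w| = 1 -> `|(L p).[w]| ^+ 2 <= m%:C%C) /\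
  (exists2 w, `|w| = 1 & `|(L p).[w]| ^+ 2 = m%:C%C).
Proof.
move=> pN [[z0 [z0_circ z0_max]] m_max]; split.
  move=> w w_circ.
  have psi_circ : Cmod (psi w) = 1.
    by apply: (@complexI R); rewrite Cmod_phi phi_psi w_circ.
  have /RleP := m_max (psi w) psi_circ.
  by rewrite -lecR Cmod_sqr_phi norm_phi_Tp // phi_psi.
exists (phi z0); first by rewrite -Cmod_phi z0_circ.
by rewrite -z0_max Cmod_sqr_phi norm_phi_Tp.
Qed.

Lemma circle_phi z : Cmod z = 1 -> `|phi z| = 1.
Proof. by move=> z_circ; rewrite -Cmod_phi z_circ. Qed.

Lemma circle_psi w : `|w| = 1 -> Cmod (psi w) = 1.
Proof. by move=> w_circ; apply: (@complexI R); rewrite Cmod_phi phi_psi w_circ. Qed.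

(* max |P_p|^2 = g^2 max |L_p|^2 with g = gap_prod p, and evaluating at the
   node z_p gives max |P_p|^2 >= g^2. *)
Lemma Pp_circle_max p m A : (p < N)%N ->
  is_max_circle (fun z => pow (Cmod (Tp N theta p z)) 2) m ->
  is_max_circle (fun z => pow (Cmod (Pp N theta p z)) 2) A ->
  (A%:C%C <= (gap_prod N theta p)%:C%C ^+ 2 * m%:C%C) /\
  ((gap_prod N theta p)%:C%C ^+ 2 <= A%:C%C).
Proof.
move=> pN Tp_max [[zA [zA_circ zA_max]] A_max]; rewrite gap_prod_phi; split.
  rewrite -zA_max Cmod_sqr_phi phi_Pp norm_prod_others // exprMn.
  apply: ler_wpM2l; first exact/exprn_ge0/ltW/gap_gt0.
  by have [L_le _] := lagrange_circle_max pN Tp_max; apply/L_le/circle_phi.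
have /RleP := A_max (zq theta p) (Cmod_Cexpi _).
by rewrite -lecR Cmod_sqr_phi phi_Pp normr_prod.
Qed.

(* |prod_q (z - z_q)| <= |z - z_p| |P_p(z)| <= 2 |P_p(z)| on the unit circle. *)
Lemma Pall_circle_max p A B : (p < N)%N ->
  is_max_circle (fun z => pow (Cmod (Pp N theta p z)) 2) A ->
  is_max_circle (fun z => pow (Cmod (Pall N theta z)) 2) B ->
  B%:C%C <= 4%:R * A%:C%C.
Proof.
move=> pN [_ A_max] [[zB [zB_circ zB_max]] _].
rewrite -zB_max Cmod_sqr_phi phi_Pall (prod_nodes_split _ _ pN) normrM exprMn.
apply: ler_pM; try exact: exprn_ge0.
  have -> : 4%:R = 2%:R ^+ 2 :> R[i] by rewrite -natrX.
  rewrite ler_pXn2r ?nnegrE ?ler0n //; apply: le_trans (ler_normB _ _) _.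
  by rewrite circle_phi // node_norm.
by have /RleP := A_max zB zB_circ; rewrite -lecR Cmod_sqr_phi phi_Pp.
Qed.

(* The monic polynomial prod_q (X - z_q) has a coefficient equal to 1, so by
   the coefficient bound at the (N+1)-th roots of unity its circle maximum is >= 1. *)
Lemma Pall_circle_max_ge1 B :
  is_max_circle (fun z => pow (Cmod (Pall N theta z)) 2) B -> 1 <= B%:C%C.
Proof.
move=> [_ B_max].
pose P := \prod_(q <- iota 0 N) ('X - (Z q)%:P).
have size_P : size P = N.+1 by rewrite size_prod_XsubC size_iota.
have lead_P : P`_N = 1.
  by have := monic_prod_XsubC (iota 0 N) xpredT Z; rewrite monicE lead_coefE size_P => /eqP.
have := coef_sqr_le_circle_max (unit_root_prim (ltn0Sn N)) (P := P) (j := N) (m := B%:C%C).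
rewrite lead_P normr1 expr1n size_P; apply=> // w w_circ.
rewrite horner_prod (eq_bigr _ (fun q _ => hornerXsubC _ _)).
have /RleP := B_max (psi w) (circle_psi w_circ).
by rewrite -lecR Cmod_sqr_phi phi_Pall phi_psi.
Qed.

End NodePolynomials.

Section RmaxList.
Local Open Scope R_scope.

Lemma Rmax_list_ge N f p : lt p N -> f p <= Rmax_list N f.
Proof.
move=> pN; have : List.In p (List.seq 0 N) by apply/in_seq; lia.
rewrite /Rmax_list; elim: (List.seq 0 N) => [//|q l IH] /= [->|p_l].
  exact: Rmax_l.
by apply: Rle_trans (IH p_l) _; exact: Rmax_r.
Qed.

Lemma Rmax_list_scale_le N f c : 0 <= c ->
  (forall p, lt p N -> c * f p <= 1) -> c * Rmax_list N f <= 1.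
Proof.
move=> c_ge0 cf_le; have : forall p, List.In p (List.seq 0 N) -> c * f p <= 1.
  by move=> p /in_seq p_in; apply: cf_le; lia.
rewrite /Rmax_list; elim: (List.seq 0 N) => [|q l IH] /= cf_l; first lra.
apply: (Rmax_case (f q) _ (fun z => c * z <= 1)); first by apply: cf_l; left.
by apply: IH => p p_l; apply: cf_l; right.
Qed.

End RmaxList.

Section MainBounds.
Local Open Scope R_scope.
Variables (N : nat) (theta : nat -> R) (lam1 : R) (M : nat -> R).
Hypothesis hN : le 1 N.
Hypothesis hrange : forall q, lt q N -> 0 <= theta q < 1.
Hypothesis hdist : forall p q, lt p N -> lt q N -> p <> q -> theta p <> theta q.
Hypothesis hlam1 : is_smallest_eigenvalue N (Gram N theta) lam1.
Hypothesis hM :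
  forall p, lt p N -> is_max_circle (fun z => Cmod (Tp N theta p z) ^ 2) (M p).

Let N_gt0 : (0 < N)%N := introT ssrnat.ltP hN.
Let hrange_b q (qN : (q < N)%N) := hrange (elimT ssrnat.ltP qN).
Let hdist_b p q (pN : (p < N)%N) (qN : (q < N)%N) :=
  hdist (elimT ssrnat.ltP pN) (elimT ssrnat.ltP qN).
Let Z_inj := node_inj hrange_b hdist_b.
Let lam_eigen := eigen_gram_mx N_gt0 (proj1 hlam1).
Let lam_min := eigen_min_gram_mx N_gt0 (proj2 hlam1).
Let L_circle p (pN : lt p N) :=
  lagrange_circle_max hrange_b hdist_b (introT ssrnat.ltP pN) (hM pN).

Lemma lam1_ge0 : 0 <= lam1.
Proof. by apply/RleP; rewrite -ler0c; exact: lam_ge0 lam_eigen. Qed.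

(* L_p(z_p) = 1, so max |T_p|^2 >= 1. *)
Lemma M_ge1 p : lt p N -> 1 <= M p.
Proof.
move=> pN; have [L_le _] := L_circle pN; have pN' := introT ssrnat.ltP pN.
have := L_le _ (node_norm theta p); rewrite lagrange_node // eqxx normr1 expr1n.
by rewrite -[1%R]/(1%:C%C) lecR => /RleP.
Qed.

Lemma lam1_M_le1 p : lt p N -> lam1 * M p <= 1.
Proof.
move=> pN; have [_ [w w_circ w_max]] := L_circle pN.
have := lam_upper Z_inj (scale_gt0 N_gt0) (scale_sqr N_gt0) lam_eigen lam_min
  (introT ssrnat.ltP pN) w_circ.
by rewrite w_max -rmorphM -[1%R]/(1%:C%C) lecR => /RleP.
Qed.

Lemma lam1_lower m : (forall p, lt p N -> M p <= m) -> 1 <= INR N ^ 3 * m * lam1.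
Proof.
move=> M_le.
have L_le p w : (p < N)%N -> `|w|%R = 1%R ->
    (`|(lagrange N (node theta) p).[w]| ^+ 2 <= m%:C%C)%R.
  move=> /ssrnat.ltP pN w_circ; have [L_le _] := L_circle pN.
  by apply: le_trans (L_le w w_circ) _; rewrite lecR; apply/RleP/M_le.
have := lam_lower Z_inj (scale_gt0 N_gt0) (scale_sqr N_gt0) lam_eigen
  (unit_root_prim N_gt0) L_le.
rewrite -(rmorph_nat (real_complex R)) -rmorphXn -!rmorphM -[1%R]/(1%:C%C) lecR.
by move=> /RleP; rewrite RpowE INRE.
Qed.

Lemma gap_prod_small : exists p0, lt p0 N /\ gap_prod N theta p0 <= INR N.
Proof.
have [p pN gap_le] := gap_exists Z_inj N_gt0 (fun q _ => node_norm theta q).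
exists p; split; first exact/ssrnat.ltP.
move: gap_le; rewrite -gap_prod_phi -(rmorph_nat (real_complex R)) lecR.
by move=> /RleP; rewrite INRE.
Qed.

Lemma gap_prod_gt0 p : lt p N -> 0 < gap_prod N theta p.
Proof.
move=> /ssrnat.ltP pN; have := gap_gt0 Z_inj pN.
by rewrite -gap_prod_phi -[0%R]/(0%:C%C) ltcR => /RltP.
Qed.

Lemma Pp_max_bounds p0 A : lt p0 N ->
  is_max_circle (fun z => Cmod (Pp N theta p0 z) ^ 2) A ->
  A <= gap_prod N theta p0 ^ 2 * M p0 /\ gap_prod N theta p0 ^ 2 <= A.
Proof.
move=> p0N A_max.
have [A_le A_ge] := Pp_circle_max hrange_b hdist_b (introT ssrnat.ltP p0N) (hM p0N) A_max.
move: A_le A_ge; rewrite -rmorphXn -rmorphM !lecR => /RleP A_le /RleP A_ge.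
by rewrite RpowE RmultE.
Qed.

Lemma Pall_max_bounds p0 A B : lt p0 N ->
  is_max_circle (fun z => Cmod (Pp N theta p0 z) ^ 2) A ->
  is_max_circle (fun z => Cmod (Pall N theta z) ^ 2) B ->
  B <= 4 * A /\ 1 <= B.
Proof.
move=> p0N A_max B_max; split.
  have := Pall_circle_max (introT ssrnat.ltP p0N) A_max B_max.
  rewrite -(rmorph_nat (real_complex R)) -rmorphM lecR => B_le.
  by apply/RleP; rewrite RmultE IZRposE INRE.
have := Pall_circle_max_ge1 B_max.
by rewrite -[1%R]/(1%:C%C) lecR => /RleP.
Qed.

Lemma inv_max_le_lam1 : 1 / (INR N ^ 3 * Rmax_list N M) <= lam1.
Proof.
have N_ge1 : 1 <= INR N by apply: (le_INR 1).
have max_ge1 : 1 <= Rmax_list N M.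
  apply: Rle_trans (M_ge1 hN) (Rmax_list_ge M hN).
have lower := lam1_lower (fun p pN => Rmax_list_ge M pN).
have N3M_gt0 : 0 < INR N ^ 3 * Rmax_list N M.
  by apply: Rmult_lt_0_compat; [apply: pow_lt|]; lra.
apply: (Rmult_le_reg_l _ _ _ N3M_gt0).
by rewrite /Rdiv Rmult_1_l Rinv_r //; lra.
Qed.

Lemma lam1_le_inv_max : lam1 <= 1 / Rmax_list N M.
Proof.
have max_ge1 : 1 <= Rmax_list N M.
  apply: Rle_trans (M_ge1 hN) (Rmax_list_ge M hN).
have scaled := Rmax_list_scale_le lam1_ge0 lam1_M_le1.
apply: (Rmult_le_reg_r (Rmax_list N M)); first lra.
by rewrite /Rdiv Rmult_1_l Rinv_l //; lra.
Qed.

Lemma lam1_le_Pp_bound p0 A : lt p0 N -> gap_prod N theta p0 <= INR N ->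
  is_max_circle (fun z => Cmod (Pp N theta p0 z) ^ 2) A -> lam1 <= INR N ^ 2 / A.
Proof.
move=> p0N gap_le A_max.
have [A_le A_ge] := Pp_max_bounds p0N A_max.
have g_gt0 := gap_prod_gt0 p0N; set g := gap_prod N theta p0 in gap_le A_le A_ge g_gt0.
have A_gt0 : 0 < A by apply: Rlt_le_trans A_ge; apply: pow_lt.
have lam1_M := lam1_M_le1 p0N; have l0 := lam1_ge0.
apply: (Rmult_le_reg_r A) => //; rewrite /Rdiv Rmult_assoc Rinv_l ?Rmult_1_r; last lra.
have g2_le : g ^ 2 <= INR N ^ 2 by apply: pow_incr; lra.
apply: Rle_trans g2_le.
apply: Rle_trans (Rmult_le_compat_l _ _ _ l0 A_le) _.
have g2_ge0 : 0 <= g ^ 2 by apply: pow_le; lra.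
by nra.
Qed.

Lemma Pp_bound_le_Pall_bound p0 A B : lt p0 N ->
  is_max_circle (fun z => Cmod (Pp N theta p0 z) ^ 2) A ->
  is_max_circle (fun z => Cmod (Pall N theta z) ^ 2) B ->
  INR N ^ 2 / A <= 4 * INR N ^ 2 / B.
Proof.
move=> p0N A_max B_max.
have [_ A_ge] := Pp_max_bounds p0N A_max.
have A_gt0 : 0 < A.
  by apply: Rlt_le_trans A_ge; apply: pow_lt; exact: gap_prod_gt0.
have [B_le B_ge1] := Pall_max_bounds p0N A_max B_max.
have N2_ge0 : 0 <= INR N ^ 2 by apply: pow2_ge_0.
have inv_le : / A <= 4 * / B.
  apply: (Rmult_le_reg_l (A * B)); first nra.
  have -> : A * B * / A = B by field; lra.
  have -> : A * B * (4 * / B) = 4 * A by field; lra.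
  exact: B_le.
rewrite /Rdiv (Rmult_comm 4) Rmult_assoc.
exact: Rmult_le_compat_l.
Qed.

End MainBounds.

End VandermondeSpectrum.

Theorem mainTheorem9 (N : nat) (theta : nat -> R)
  (hN : (1 <= N)%nat)
  (hrange : forall q, (q < N)%nat -> 0 <= theta q < 1)
  (hdist : forall p q, (p < N)%nat -> (q < N)%nat -> p <> q -> theta p <> theta q)
  (lam1 : R) (hlam1 : is_smallest_eigenvalue N (Gram N theta) lam1)
  (M : nat -> R)
  (hM : forall p, (p < N)%nat -> is_max_circle (fun z => Cmod (Tp N theta p z) ^ 2) (M p)) :
  1 / (INR N ^ 3 * Rmax_list N M) <= lam1 /\
  lam1 <= 1 / Rmax_list N M /\
  (exists p0, (p0 < N)%nat /\ gap_prod N theta p0 <= INR N) /\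
  (forall p0, (p0 < N)%nat -> gap_prod N theta p0 <= INR N ->
   forall A B : R,
     is_max_circle (fun z => Cmod (Pp N theta p0 z) ^ 2) A ->
     is_max_circle (fun z => Cmod (Pall N theta z) ^ 2) B ->
     lam1 <= INR N ^ 2 / A /\ INR N ^ 2 / A <= 4 * INR N ^ 2 / B).
Proof.
  split; [exact (VandermondeSpectrum.inv_max_le_lam1 hN hrange hdist hlam1 hM) |].
  split; [exact (VandermondeSpectrum.lam1_le_inv_max hN hrange hdist hlam1 hM) |].
  split; [exact (VandermondeSpectrum.gap_prod_small hN hrange hdist) |].
  intros p0 p0N gap_le A B A_max B_max; split.
  - exact (VandermondeSpectrum.lam1_le_Pp_bound hN hrange hdist hlam1 hM p0N gap_le A_max).
  - exact (VandermondeSpectrum.Pp_bound_le_Pall_bound hrange hdist hM p0N A_max B_max).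
Qed.
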